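(* Let $n\ge5$, let $\Delta$ be a non-singular $(d-1)$-complex on $[n-1]$ and $\Delta'$ a singular $(d-1)$-complex on $[n-1]$. Then there are no nonnegative integers $m_I$ with $D_\Delta=D_{\Delta'}+\sum_I m_IE_I$ in $\operatorname{Pic}(\overline{\mathcal M}_{0,n})$.
   Context: $\operatorname{Pic}(\overline{\mathcal M}_{0,n})=\mathbb ZH\oplus\bigoplus_I\mathbb ZE_I$ (sum over $I\subseteq[n-1]$, $1\le|I|\le n-4$) via a fixed Kapranov blow-up presentation $\overline{\mathcal M}_{0,n}\cong\operatorname{Bl}\mathbb P^{n-3}$. A $k$-simplex on $[n-1]$ is a multiset of cardinality $k+1$ with entries in $[n-1]$; a $k$-complex is a finite set of distinct $k$-simplices; a simplex is singular if some entry has multiplicity $\ge2$; a complex is singular if it contains a singular simplex, non-singular otherwise. For a $(d-1)$-complex $\Delta$, $D_\Delta=dH-\sum_I\big(d-\max_{\sigma\in\Delta}\sum_{i\in I}\operatorname{mult}_i(\sigma)\big)E_I$. *)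

From HB Require Import structures.
From mathcomp Require Import all_boot all_order all_algebra.
Set Implicit Arguments. Unset Strict Implicit. Unset Printing Implicit Defensive.
Import Order.TTheory GRing.Theory Num.Theory.

(* The ground set [n-1] = {1,...,n-1} is modelled by 'I_(n.-1) = {0,...,n-2}
   (relabelling i |-> i+1). *)

(* A multiset on [N] is given by its multiplicity function. *)
Definition simplex (N : nat) := {ffun 'I_N -> nat}.
Definition mult (N : nat) (i : 'I_N) (s : simplex N) : nat := s i.
Definition card_ms (N : nat) (s : simplex N) : nat := \sum_(i : 'I_N) mult i s.

(* A k-simplex is a multiset of cardinality k+1; a (d-1)-simplex has cardinality d. *)
Definition is_simplex (N k : nat) (s : simplex N) : bool := card_ms s == k.+1.

Definition is_complex (N d : nat) (D : seq (simplex N)) : bool :=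
  uniq D && all (fun s => card_ms s == d) D.

Definition singular_simplex (N : nat) (s : simplex N) : bool :=
  [exists i : 'I_N, 2 <= mult i s].
Definition singular_complex (N : nat) (D : seq (simplex N)) : bool :=
  has (@singular_simplex N) D.

Definition valid_index (n : nat) (I : {set 'I_n.-1}) : bool :=
  (1 <= #|I|) && (#|I| <= n - 4).

(* Pic(M_{0,n}bar) = Z H (+) (+)_I Z E_I : an element is given by its coordinates;
   only the coordinates at valid I are meaningful. *)
Record pic (n : nat) := Pic { coefH : int; coefE : {set 'I_n.-1} -> int }.

Definition pic_eq (n : nat) (x y : pic n) : Prop :=
  coefH x = coefH y /\ forall I : {set 'I_n.-1}, valid_index I -> coefE x I = coefE y I.

Definition pic_add (n : nat) (x y : pic n) : pic n :=
  @Pic n (coefH x + coefH y)%R (fun I => coefE x I + coefE y I)%R.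

Definition sumE (n : nat) (m : {set 'I_n.-1} -> int) : pic n := @Pic n 0%R m.

Definition maxmult (N : nat) (D : seq (simplex N)) (I : {set 'I_N}) : nat :=
  \max_(s <- D) \sum_(i in I) mult i s.

Definition divisor (n d : nat) (D : seq (simplex n.-1)) : pic n :=
  @Pic n (d%:Z) (fun I => - (d%:Z - (maxmult D I)%:Z))%R.

From HB Require Import structures.
From mathcomp Require Import all_boot all_order all_algebra.
From mathcomp Require Import zify.
Import Order.TTheory GRing.Theory Num.Theory.
Set Implicit Arguments. Unset Strict Implicit. Unset Printing Implicit Defensive.

(* The E_I-coefficient of D_Delta is maxmult Delta I - d,
   so an identity D_Delta = D_Delta' + sum_I m_I E_I with all m_I >= 0 forces
   maxmult Delta' I <= maxmult Delta I for every admissible index set I.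
   Test this on a singleton I = {i}, admissible as soon as n >= 5:
   maxmult Delta {i} is the largest multiplicity of i in a simplex of Delta,
   which is at most 1 when Delta is non-singular, while choosing i to be an
   entry of multiplicity >= 2 in a singular simplex of Delta' makes
   maxmult Delta' {i} >= 2.  The file first records these four facts
   (admissibility of singletons, the two bounds on maxmult over a singleton,
   and the monotonicity forced by an effective difference) and then combines
   them. *)

Lemma valid_index_set1 (n : nat) (i : 'I_n.-1) :
  5 <= n -> valid_index [set i].
Proof. by move=> n5; rewrite /valid_index cards1 /=; lia. Qed.

Lemma maxmult_set1 (N : nat) (D : seq (simplex N)) (i : 'I_N) :
  maxmult D [set i] = \max_(s <- D) mult i s.
Proof. by apply: eq_bigr => s _; rewrite big_set1. Qed.

Lemma maxmult_set1_nonsingular (N : nat) (D : seq (simplex N)) (i : 'I_N) :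
  ~~ singular_complex D -> maxmult D [set i] <= 1.
Proof.
move=> nsD; rewrite maxmult_set1; apply/bigmax_leqP_seq => s sD _.
rewrite leqNgt; apply: contra nsD => Hi.
by apply/hasP; exists s => //; apply/existsP; exists i.
Qed.

Lemma maxmult_set1_singular (N : nat) (D : seq (simplex N)) (s : simplex N)
    (i : 'I_N) :
  s \in D -> 2 <= mult i s -> 2 <= maxmult D [set i].
Proof.
move=> sD Hi; rewrite maxmult_set1; apply: leq_trans Hi _.
exact: (@leq_bigmax_seq _ D xpredT (fun t => mult i t) s sD isT).
Qed.

(* If D_Delta - D_Delta' is effective on the E_I, then maxmult grows on
   every admissible I (the degrees d cancel). *)
Lemma effective_difference_maxmult (n d : nat) (D D' : seq (simplex n.-1))
    (m : {set 'I_n.-1} -> int) (I : {set 'I_n.-1}) :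
  valid_index I -> (0 <= m I)%R ->
  pic_eq (divisor d D) (pic_add (divisor d D') (sumE m)) ->
  maxmult D' I <= maxmult D I.
Proof. by move=> vI mI0 [_ /(_ I vI) /=]; lia. Qed.

Theorem mainTheorem4 (n d : nat) (D D' : seq (simplex n.-1)) :
  5 <= n ->
  is_complex d D -> ~~ singular_complex D ->
  is_complex d D' -> singular_complex D' ->
  ~ (exists m : {set 'I_n.-1} -> int,
       (forall I, valid_index I -> (0 <= m I)%R) /\
       pic_eq (divisor d D) (pic_add (divisor d D') (sumE m))).
Proof.
move=> n5 _ nsD _ /hasP [s' s'D' /existsP [i Hi]] [m [m_ge0 Heq]].
have vI := valid_index_set1 i n5.
have le_max := effective_difference_maxmult vI (m_ge0 _ vI) Heq.
have ge2 := maxmult_set1_singular s'D' Hi.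
have le1 := maxmult_set1_nonsingular i nsD.
by move: (leq_trans ge2 (leq_trans le_max le1)).
Qed.
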